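(* Let $n\geq 4$ and let $\delta: VT_n\to\mathrm{GL}_{n+1}(\mathbb{C})$ be a homogeneous $3$-local representation of the virtual twin group $VT_n$. Then $\delta$ is reducible.
   Context: The virtual twin group $VT_n$ ($n\geq 2$) has generators $s_1,\dots,s_{n-1},\rho_1,\dots,\rho_{n-1}$ and defining relations: $s_i^2=1$ ($1\le i\le n-1$); $s_is_j=s_js_i$ ($|i-j|\ge2$); $\rho_i\rho_{i+1}\rho_i=\rho_{i+1}\rho_i\rho_{i+1}$ ($1\le i\le n-2$); $\rho_i\rho_j=\rho_j\rho_i$ ($|i-j|\ge2$); $\rho_i^2=1$; $s_i\rho_j=\rho_js_i$ ($|i-j|\ge2$); $\rho_i\rho_{i+1}s_i=s_{i+1}\rho_i\rho_{i+1}$ ($1\le i\le n-2$). A representation $\delta:VT_n\to\mathrm{GL}_{n+1}(\mathbb{C})$ is homogeneous $3$-local if there are fixed $M,N\in\mathrm{GL}_3(\mathbb{C})$ with $\delta(s_i)=\mathrm{diag}(I_{i-1},M,I_{n-i-1})$ and $\delta(\rho_i)=\mathrm{diag}(I_{i-1},N,I_{n-i-1})$ for all $1\le i\le n-1$ (block-diagonal, $I_r$ the $r\times r$ identity). Reducible means there is a subspace $0\neq U\neq\mathbb{C}^{n+1}$ invariant under all $\delta(g)$. *)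

From HB Require Import structures.
From mathcomp Require Import all_boot all_order all_algebra.
From mathcomp Require Import complex.
From mathcomp Require Import Rstruct.
Import ComplexField.
Set Implicit Arguments. Unset Strict Implicit. Unset Printing Implicit Defensive.
Import Order.TTheory GRing.Theory Num.Theory.
Local Open Scope ring_scope.

Notation CC := (complex Rdefinitions.R).

(* local_mx n i X : the (n+1)x(n+1) block-diagonal matrix
   diag(I_{i-1}, X, I_{n-i-1}) for 1 <= i <= n-1 (1-based i).
   The 3x3 block occupies the (0-based) rows/columns i-1, i, i+1. *)
Definition local_mx (n i : nat) (X : 'M[CC]_3) : 'M[CC]_(n.+1) :=
  \matrix_(a < n.+1, b < n.+1)
    if (i.-1 <= a < i.+2)%N && (i.-1 <= b < i.+2)%N
    then X (inord (a - i.-1)) (inord (b - i.-1))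
    else (a == b)%:R.

(* The defining relations of VT_n hold for the assignment
   s_i |-> local_mx n i M, rho_i |-> local_mx n i N (1 <= i <= n-1);
   i.e. this assignment extends to a homomorphism VT_n -> GL_{n+1}(C). *)
Definition VT_relations (n : nat) (M N : 'M[CC]_3) : Prop :=
  let S i := local_mx n i M in
  let P i := local_mx n i N in
     (forall i, (1 <= i <= n.-1)%N -> S i *m S i = 1%:M) /\
      (forall i j, (1 <= i <= n.-1)%N -> (1 <= j <= n.-1)%N ->
          (i.+2 <= j \/ j.+2 <= i)%N -> S i *m S j = S j *m S i) /\
      (forall i, (1 <= i <= n.-2)%N ->
          P i *m P i.+1 *m P i = P i.+1 *m P i *m P i.+1) /\
      (forall i j, (1 <= i <= n.-1)%N -> (1 <= j <= n.-1)%N ->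
          (i.+2 <= j \/ j.+2 <= i)%N -> P i *m P j = P j *m P i) /\
      (forall i, (1 <= i <= n.-1)%N -> P i *m P i = 1%:M) /\
      (forall i j, (1 <= i <= n.-1)%N -> (1 <= j <= n.-1)%N ->
          (i.+2 <= j \/ j.+2 <= i)%N -> S i *m P j = P j *m S i) /\
      (forall i, (1 <= i <= n.-2)%N ->
          P i *m P i.+1 *m S i = S i.+1 *m P i *m P i.+1).

Definition VT_gens (n : nat) (M N : 'M[CC]_3) : seq 'M[CC]_(n.+1) :=
  [seq local_mx n i M | i <- iota 1 n.-1] ++ [seq local_mx n i N | i <- iota 1 n.-1].

(* The subgroup of GL_{m} generated by a list of matrices
   (= the image delta(VT_n) when gens are the generator images). *)
Inductive in_gen_group (m : nat) (gens : seq 'M[CC]_m) : 'M[CC]_m -> Prop :=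
  | gen_one : in_gen_group gens 1%:M
  | gen_base : forall A, A \in gens -> in_gen_group gens A
  | gen_mul : forall A B, in_gen_group gens A -> in_gen_group gens B ->
      in_gen_group gens (A *m B)
  | gen_inv : forall A, in_gen_group gens A -> in_gen_group gens (invmx A).

(* A subspace U of C^m (column vectors), represented as the row space of a
   matrix U (so v lies in U iff (v^T <= U)%MS), is invariant under A. *)
Definition invariant_subspace (m : nat) (U : 'M[CC]_m) (A : 'M[CC]_m) : Prop :=
  forall v : 'cV[CC]_m, (v^T <= U)%MS -> ((A *m v)^T <= U)%MS.

Definition reducible (m : nat) (gens : seq 'M[CC]_m) : Prop :=
  exists U : 'M[CC]_m,
    [/\ \rank U != 0%N, \rank U != m &
        forall A, in_gen_group gens A -> invariant_subspace U A].

From HB Require Import structures.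
From mathcomp Require Import all_boot all_order all_algebra.
From mathcomp Require Import complex Rstruct zify.
Import ComplexField.
Set Implicit Arguments. Unset Strict Implicit. Unset Printing Implicit Defensive.
Import Order.TTheory GRing.Theory Num.Theory.
Local Open Scope ring_scope.

(* Blocks at positions 1 and 3 overlap in one index, so comparing the entries
   of s_1 s_3 = s_3 s_1 (and of the analogous relations for rho_1, rho_3 and
   the mixed pairs) gives X_02 Y_0c = X_12 Y_0c = 0 for X, Y in {M, N} and
   c in {1, 2} (0-based block indices).  Hence M_02 = N_02 = 0; then either
   M_12 = N_12 = 0, and the last basis vector is a common eigenvector, or
   M_01 = N_01 = 0, and the coordinate hyperplane x_0 = 0 is invariant. *)

Lemma stablemx_invmx (F : fieldType) n (V f : 'M[F]_n) :
  f \in unitmx -> stablemx V f -> stablemx V (invmx f).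
Proof.
move=> uf sVf; have /andP[_ sV_Vf] : (V *m f == V)%MS.
  by rewrite -(mxrank_leqif_eq sVf) mxrankMfree ?row_free_unit.
by rewrite -[X in (_ <= X)%MS](mulmxK uf) submxMr.
Qed.

Lemma mulmx_entry_single (F : pzRingType) m n p (A : 'M[F]_(m, n)) (B : 'M_(n, p))
    i j k0 :
  (forall k, k != k0 -> A i k * B k j = 0) -> (A *m B) i j = A i k0 * B k0 j.
Proof. by move=> Ak0; rewrite mxE (bigD1 k0) //= big1 ?addr0. Qed.

Section CoordinateSubspace.

Variables (F : fieldType) (m : nat) (p : pred 'I_m).

Definition coord_subspace : 'M[F]_m := diag_mx (\row_i (p i)%:R).

Lemma stablemx_coord_subspace (G : 'M[F]_m) :
  (forall i j, p i -> ~~ p j -> G i j = 0) -> stablemx coord_subspace G.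
Proof.
move=> G0; suff -> : coord_subspace *m G = coord_subspace *m G *m coord_subspace.
  exact: submxMl.
apply/matrixP=> i j; rewrite mul_mx_diag mul_diag_mx !mxE.
by case pi: (p i); case pj: (p j); rewrite ?mul0r ?mulr1 // G0 ?pi ?pj ?mulr0.
Qed.

Lemma mxrank_coord_subspace_neq0 i : p i -> \rank coord_subspace != 0%N.
Proof.
move=> pi; rewrite mxrank_eq0; apply/eqP=> /matrixP /(_ i i).
by rewrite !mxE eqxx pi /= => /eqP; rewrite oner_eq0.
Qed.

Lemma mxrank_coord_subspace_neqn j : ~~ p j -> \rank coord_subspace != m.
Proof.
move=> pj; apply/negP=> /eqP full; have : coord_subspace \in unitmx.
  by rewrite -row_free_unit /row_free full.
by rewrite unitmxE det_diag (bigD1 j) //= mxE (negbTE pj) mul0r unitr0.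
Qed.

End CoordinateSubspace.

Lemma stablemx_trmx_invariant m (U A : 'M[CC]_m) :
  stablemx U A^T -> invariant_subspace U A.
Proof. by move=> sUA v vU; rewrite trmx_mul (submx_trans (submxMr _ vU)). Qed.

Lemma in_gen_group_stable m (gens : seq 'M[CC]_m) (U : 'M[CC]_m) :
  {in gens, forall G, G \in unitmx /\ stablemx U G^T} ->
  forall A, in_gen_group gens A -> A \in unitmx /\ stablemx U A^T.
Proof.
move=> sgens A; elim=> {A} [| | A B _ [uA sA] _ [uB sB] | A _ [uA sA]].
- by rewrite unitmx1 trmx1 stablemxC.
- exact: sgens.
- by rewrite unitmx_mul uA uB trmx_mul stablemxM.
- by rewrite unitmx_inv uA trmx_inv stablemx_invmx ?unitmx_tr.
Qed.

Lemma reducible_coord_subspace m (gens : seq 'M[CC]_m) (p : pred 'I_m) i j :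
  p i -> ~~ p j -> {in gens, forall G, G \in unitmx} ->
  {in gens, forall (G : 'M_m) a b, p a -> ~~ p b -> G b a = 0} ->
  reducible gens.
Proof.
move=> pi pj ugens G0; exists (coord_subspace CC p); split.
- exact: mxrank_coord_subspace_neq0 pi.
- exact: mxrank_coord_subspace_neqn pj.
move=> A gA; apply/stablemx_trmx_invariant/(in_gen_group_stable _ gA).2 => G hG.
split; first exact: ugens.
by apply: stablemx_coord_subspace => a b pa pb; rewrite mxE G0.
Qed.

Section LocalMatrices.

Variables (n i : nat) (X : 'M[CC]_3).

Lemma local_mx_id_row (a b : 'I_n.+1) :
  ~~ (i.-1 <= a < i.+2)%N -> local_mx n i X a b = (a == b)%:R.
Proof. by move=> a_out; rewrite mxE (negbTE a_out). Qed.

Lemma local_mx_id_col (a b : 'I_n.+1) :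
  ~~ (i.-1 <= b < i.+2)%N -> local_mx n i X a b = (a == b)%:R.
Proof. by move=> b_out; rewrite mxE (negbTE b_out) andbF. Qed.

Lemma local_mx_block (a b : 'I_n.+1) :
  (i.-1 <= a < i.+2)%N -> (i.-1 <= b < i.+2)%N ->
  local_mx n i X a b = X (inord (a - i.-1)) (inord (b - i.-1)).
Proof. by move=> a_in b_in; rewrite mxE a_in b_in. Qed.

Lemma local_mx_first_row (j : 'I_n.+1) :
  (0 < i)%N -> X (inord 0) (inord 1) = 0 -> X (inord 0) (inord 2) = 0 ->
  j != ord0 -> local_mx n i X ord0 j = 0.
Proof.
move=> i_gt0 X01 X02 j_neq0.
have j_gt0 : (0 < j)%N.
  by rewrite lt0n; apply: contra j_neq0 => /eqP j0; apply/eqP/val_inj.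
have [j_in | j_out] := boolP (i.-1 <= j < i.+2)%N; last first.
  by rewrite local_mx_id_col // eq_sym (negbTE j_neq0).
have [i1 | i_ge2] : i = 1%N \/ (2 <= i)%N by lia.
  rewrite local_mx_block //; last by rewrite i1.
  rewrite i1 /=.
  by have [-> | ->] : j = 1%N :> nat \/ j = 2%N :> nat by lia.
rewrite local_mx_id_row; last by apply/negP => /=; lia.
by rewrite eq_sym (negbTE j_neq0).
Qed.

Lemma local_mx_last_column (j : 'I_n.+1) :
  (0 < i < n)%N -> X (inord 0) (inord 2) = 0 -> X (inord 1) (inord 2) = 0 ->
  j != ord_max -> local_mx n i X j ord_max = 0.
Proof.
move=> i_bound X02 X12 j_neq_max.
have j_lt : (j < n)%N.
  rewrite ltn_neqAle -ltnS ltn_ord andbT.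
  by apply: contra j_neq_max => /eqP jn; apply/eqP/val_inj.
have [i_lt | i_last] : (i.+2 <= n)%N \/ i = n.-1 by lia.
  rewrite local_mx_id_col; last by apply/negP => /=; lia.
  by rewrite (negbTE j_neq_max).
have [j_in | j_out] := boolP (i.-1 <= j < i.+2)%N.
  rewrite local_mx_block /=; [|by []|lia].
  have -> : (n - i.-1 = 2)%N by lia.
  by have [-> | ->] : (j - i.-1 = 0)%N \/ (j - i.-1 = 1)%N by lia.
by rewrite local_mx_id_row // (negbTE j_neq_max).
Qed.

End LocalMatrices.

Section OverlappingBlocks.

Variables (n i : nat) (A B : 'M[CC]_3) (a c : nat).
Hypotheses (i_bound : (i.+4 <= n)%N) (a_lt2 : (a < 2)%N) (c_bound : (0 < c < 3)%N).

Let row : 'I_n.+1 := inord (i + a)%N.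
Let col : 'I_n.+1 := inord (i + c.+2)%N.

Let rowE : row = (i + a)%N :> nat. Proof. by rewrite inordK //; lia. Qed.
Let colE : col = (i + c.+2)%N :> nat. Proof. by rewrite inordK //; lia. Qed.

Lemma local_mx_overlap_mul :
  (local_mx n i.+1 A *m local_mx n i.+3 B) row col =
    A (inord a) (inord 2) * B (inord 0) (inord c).
Proof.
rewrite (mulmx_entry_single (k0 := inord (i + 2)%N)); last first.
  move=> k k_neq; have {}k_neq : k != (i + 2)%N :> nat.
    by apply: contra k_neq => /eqP ki; apply/eqP/val_inj; rewrite /= inordK //; lia.
  have [k_lt | k_gt] : (k < i + 2)%N \/ (i + 2 < k)%N by lia.
    rewrite [local_mx _ i.+3 _ _ _]local_mx_id_row; last by apply/negP => /=; lia.
    by rewrite -val_eqE /= colE ltn_eqF ?mulr0 //; lia.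
  rewrite [local_mx _ i.+1 _ _ _]local_mx_id_col; last by apply/negP => /=; lia.
  by rewrite -val_eqE /= rowE ltn_eqF ?mul0r //; lia.
rewrite !local_mx_block /= ?rowE ?colE ?inordK; try lia.
have -> : (i + 2 - i.+2 = 0)%N by lia.
have -> : (i + c.+2 - i.+2 = c)%N by lia.
by rewrite !addKn.
Qed.

Lemma local_mx_overlap_mul_rev :
  (local_mx n i.+3 B *m local_mx n i.+1 A) row col = 0.
Proof.
have row_out : ~~ (i.+3.-1 <= row < i.+3.+2)%N by rewrite rowE; apply/negP; lia.
rewrite (mulmx_entry_single (k0 := row)); last first.
  by move=> k k_neq; rewrite local_mx_id_row // eq_sym (negbTE k_neq) mul0r.
rewrite [local_mx _ i.+1 _ _ _]local_mx_id_col; last by rewrite colE; apply/negP; lia.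
by rewrite -val_eqE /= rowE colE ltn_eqF ?mulr0 //; lia.
Qed.

Lemma commuting_local_mx_overlap :
  local_mx n i.+1 A *m local_mx n i.+3 B = local_mx n i.+3 B *m local_mx n i.+1 A ->
  A (inord a) (inord 2) * B (inord 0) (inord c) = 0.
Proof. by move=> AB; rewrite -local_mx_overlap_mul AB local_mx_overlap_mul_rev. Qed.

End OverlappingBlocks.

Section VirtualTwinRepresentation.

Variables (n : nat) (M N : 'M[CC]_3).

Lemma forall_in_VT_gens (Q : 'M[CC]_n.+1 -> Prop) :
  (forall i, (1 <= i <= n.-1)%N -> Q (local_mx n i M) /\ Q (local_mx n i N)) ->
  {in VT_gens n M N, forall G, Q G}.
Proof.
move=> QMN G; rewrite mem_cat; case/orP=> G_gen.
  have [i + ->] := mapP G_gen; rewrite mem_iota => i_bound.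
  by apply: (QMN i _).1; lia.
have [i + ->] := mapP G_gen; rewrite mem_iota => i_bound.
by apply: (QMN i _).2; lia.
Qed.

Hypothesis rels : VT_relations n M N.

Lemma VT_gens_unit : {in VT_gens n M N, forall G, G \in unitmx}.
Proof.
case: rels => S2 [_ [_ [_ [P2 _]]]]; apply: forall_in_VT_gens => i i_bound.
by split; [exact: (mulmx1_unit (S2 i i_bound)).1 | exact: (mulmx1_unit (P2 i i_bound)).1].
Qed.

Lemma VT_commute_overlap X Y : (4 <= n)%N -> X \in [:: M; N] -> Y \in [:: M; N] ->
  local_mx n 1 X *m local_mx n 3 Y = local_mx n 3 Y *m local_mx n 1 X.
Proof.
case: rels => _ [Sc [_ [Pc [_ [SPc _]]]]] n_ge4.
have i1 : (1 <= 1 <= n.-1)%N by lia.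
have i3 : (1 <= 3 <= n.-1)%N by lia.
have far : (1.+2 <= 3 \/ 3.+2 <= 1)%N by left.
rewrite !inE => /orP[] /eqP-> /orP[] /eqP->.
- exact: Sc.
- exact: SPc.
- by rewrite (SPc 3 1) //; right.
- exact: Pc.
Qed.

Lemma VT_reducible_last_column : (0 < n)%N ->
  M (inord 0) (inord 2) = 0 -> M (inord 1) (inord 2) = 0 ->
  N (inord 0) (inord 2) = 0 -> N (inord 1) (inord 2) = 0 ->
  reducible (VT_gens n M N).
Proof.
move=> n_gt0 M02 M12 N02 N12.
apply: (reducible_coord_subspace (p := pred1 ord_max) (i := ord_max) (j := ord0)).
- exact: eqxx.
- by rewrite /= -val_eqE /=; lia.
- exact: VT_gens_unit.
apply: forall_in_VT_gens => i i_bound.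
by split=> a b /eqP-> b_neq; apply: local_mx_last_column => //; lia.
Qed.

Lemma VT_reducible_first_row : (0 < n)%N ->
  M (inord 0) (inord 1) = 0 -> M (inord 0) (inord 2) = 0 ->
  N (inord 0) (inord 1) = 0 -> N (inord 0) (inord 2) = 0 ->
  reducible (VT_gens n M N).
Proof.
move=> n_gt0 M01 M02 N01 N02.
apply: (reducible_coord_subspace (p := predC1 ord0) (i := ord_max) (j := ord0)).
- by rewrite /= -val_eqE /=; lia.
- by [].
- exact: VT_gens_unit.
apply: forall_in_VT_gens => i i_bound.
by split=> a b a_neq0 /negPn/eqP->; apply: local_mx_first_row => //; case/andP: i_bound.
Qed.

End VirtualTwinRepresentation.

Theorem theorem4p3 (n : nat) (M N : 'M[CC]_3) :
  (4 <= n)%N ->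
  M \in unitmx -> N \in unitmx ->
  VT_relations n M N ->
  reducible (VT_gens n M N).
Proof.
move=> n_ge4 _ _ rels.
(* M, N are invertible anyway: s_i^2 = rho_i^2 = 1. *)
have M_gen : M \in [:: M; N] by rewrite mem_head.
have N_gen : N \in [:: M; N] by rewrite !inE eqxx orbT.
have corner X Y a c : X \in [:: M; N] -> Y \in [:: M; N] -> (a < 2)%N -> (0 < c < 3)%N ->
    X (inord a) (inord 2) * Y (inord 0) (inord c) = 0.
  move=> X_gen Y_gen a_lt2 c_bound.
  exact: (commuting_local_mx_overlap n_ge4 a_lt2 c_bound
            (VT_commute_overlap rels n_ge4 X_gen Y_gen)).
have corner02 X : X \in [:: M; N] -> X (inord 0) (inord 2) = 0.
  move=> X_gen; have /eqP := corner X X 0%N 2%N X_gen X_gen isT isT.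
  by rewrite mulf_eq0 orbb => /eqP.
have [/andP[/eqP M12 /eqP N12] | ] :=
  boolP ((M (inord 1) (inord 2) == 0) && (N (inord 1) (inord 2) == 0)).
  by apply: VT_reducible_last_column; rewrite ?corner02 //; lia.
rewrite negb_and => /orP X12_neq0.
have [X X_gen X12] : exists2 X, X \in [:: M; N] & X (inord 1) (inord 2) != 0.
  by case: X12_neq0; [exists M | exists N].
have corner01 Y : Y \in [:: M; N] -> Y (inord 0) (inord 1) = 0.
  move=> Y_gen; have /eqP := corner X Y 1%N 1%N X_gen Y_gen isT isT.
  by rewrite mulf_eq0 (negbTE X12) => /eqP.
by apply: VT_reducible_first_row; rewrite ?corner01 ?corner02 //; lia.
Qed.
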